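(* Let $p_0=2,p_1=3,p_2=5,\dots$ be the primes in increasing order. For every $n\ge1$, $$msr_n(SP_1)\;\ge\;p_{n-1}\qquad\text{and}\qquad msr_{n+1}(SP_0)\;\ge\;2\,p_{n-1},$$ where $msr_n(SP_1)$ is the maximum series without units of $n$-fillings formed by grids with modules $p_1,\dots,p_n$, and $msr_{n+1}(SP_0)$ is the maximum series without units of $(n+1)$-fillings formed by grids with modules $p_0,\dots,p_n$.
   Context: A grid $S(a)$ of module $a\ge1$ with shift $k$ is the sequence $(l_j)_{j\in\mathbb Z}$ with $l_j=0$ iff $j\equiv k\pmod a$, else $l_j=1$. Products of grids are elementwise logical ANDs; an $n$-filling with modules $a_1,\dots,a_n$ is such a product (arbitrary shifts) in which omitting any grid changes the product. $SP_1$ is the system of grids with modules $3,5,7,11,\dots$ (all odd primes) and $SP_0$ the system with modules $2,3,5,7,\dots$ (all primes). A $0$-series is a segment between positions $i<k$ with $l_i=l_k=1$ and no ones strictly between; its length is $k-i$. The maximum series is the supremum over all shifts of the largest length of a $0$-series. *)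

From mathcomp Require Import all_boot all_order all_algebra.
Set Implicit Arguments. Unset Strict Implicit. Unset Printing Implicit Defensive.
Import Order.TTheory GRing.Theory Num.Theory.
Local Open Scope ring_scope.

Definition next_prime (m : nat) : nat :=
  ex_minn (let: exist2 p H1 H2 := prime_above m in
           ex_intro (fun q => (m < q)%N && prime q) p (introT andP (conj H1 H2))).

Fixpoint nthp (i : nat) : nat :=
  match i with 0 => 2%N | i'.+1 => next_prime (nthp i') end.

(* Grid S(a) with shift k: l_j = 0 (false) iff j = k mod a, else 1 (true). *)
Definition grid (a : nat) (k : int) (j : int) : bool :=
  ~~ (j == k %[mod a%:Z])%Z.

Definition grid_prod (I : finType) (a : I -> nat) (k : I -> int)
  (P : pred I) (j : int) : bool :=
  [forall i in P, grid (a i) (k i) j].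

Definition is_filling (I : finType) (a : I -> nat) (k : I -> int) : Prop :=
  forall i : I, exists j : int,
    grid_prod a k predT j != grid_prod a k (predC1 i) j.

Definition zero_series (l : int -> bool) (i k : int) : Prop :=
  [/\ i < k, l i, l k & forall j : int, i < j -> j < k -> ~~ l j].

(* "The maximum series (sup over all shifts making the product a filling with
   modules a, of the largest length of a 0-series) is at least c":
   unfolded, some admissible choice of shifts has a 0-series of length >= c. *)
Definition msr_ge (I : finType) (a : I -> nat) (c : nat) : Prop :=
  exists k : I -> int, is_filling a k /\
    exists i j : int, zero_series (grid_prod a k predT) i j /\ c%:Z <= j - i.

From mathcomp Require Import all_boot all_order all_algebra zify ring.
Import Order.TTheory GRing.Theory Num.Theory.
Set Implicit Arguments. Unset Strict Implicit. Unset Printing Implicit Defensive.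

(** Let P = p_(n-1), let Q be the next prime, and measure positions by the odd
    number v = 2j - P. Shift the grid of each odd prime q < P so that it
    vanishes where q | v, the grid of P where v = 1 (mod P), and the grid of Q
    where v = -1 (mod Q). Every odd v with |v| < P is then killed: v = 1 and
    v = -1 by the last two grids, any other v by its least prime factor. But
    v = -P and v = P survive, since P + 1 < Q, so j = 0 and j = P bound a
    0-series of length P. No grid can be dropped, as v = q, 1, -1 is killed by
    the corresponding grid alone. For the primes including 2, let the grid of 2
    vanish at the odd positions J and read the odd grids at v = J - P: this
    gives a 0-series from 0 to 2P, and v = 2, killed by no odd grid, shows
    that the grid of 2 is needed. For n = 1 the prime P = 2 is even and the
    two small cases are checked by hand. *)

Lemma next_primeP m : [/\ (m < next_prime m)%N, prime (next_prime m) &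
  forall q, (m < q)%N -> prime q -> (next_prime m <= q)%N].
Proof.
rewrite /next_prime; case: ex_minnP => p /andP[mp pp] p_min.
by split=> // q mq qp; apply: p_min; rewrite mq qp.
Qed.

Lemma nthp_prime i : prime (nthp i).
Proof. by case: i => [|i] //=; case: (next_primeP (nthp i)). Qed.

Lemma ltn_nthpS i : (nthp i < nthp i.+1)%N.
Proof. by case: (next_primeP (nthp i)). Qed.

Lemma homo_nthp : {homo nthp : i j / (i < j)%N}.
Proof. exact: homo_ltn ltn_trans ltn_nthpS. Qed.

Lemma leq_nthp : {mono nthp : i j / (i <= j)%N}.
Proof. exact: leq_mono homo_nthp. Qed.

Lemma ltn_nthp : {mono nthp : i j / (i < j)%N}.
Proof. by move=> i j; rewrite !ltnNge leq_nthp. Qed.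

Lemma nthp_inj : injective nthp.
Proof. exact: incn_inj leq_nthp. Qed.

Lemma nthp_surj p : prime p -> exists t, nthp t = p.
Proof.
move=> pp; have p_le k : (k <= nthp k)%N.
  by elim: k => // k IHk; apply: leq_ltn_trans IHk (ltn_nthpS k).
suff : forall k, (p <= nthp k)%N -> exists t, nthp t = p by apply; apply: p_le.
elim=> [|k IHk] pk.
  by exists 0%N; apply/eqP; rewrite eqn_leq pk prime_gt1.
case: (leqP p (nthp k)) => [/IHk //|kp]; exists k.+1.
apply/eqP; rewrite eqn_leq pk andbT.
by case: (next_primeP (nthp k)) => _ _ /(_ p kp pp).
Qed.

Lemma nthp1 : nthp 1 = 3%N.
Proof. by case: (next_primeP 2) => lt2 _ /(_ 3%N isT isT) le3; apply/eqP; rewrite eqn_leq le3. Qed.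

Lemma nthp_odd i : (0 < i)%N -> odd (nthp i).
Proof.
move=> i_gt0; have := ltn_nthp 0 i; rewrite i_gt0 /=.
by case: (even_prime (nthp_prime i)) => [->|].
Qed.

Local Open Scope ring_scope.

Lemma ndvdz_small (q : nat) (x : int) : (0 < `|x| < q)%N -> ~~ (q%:Z %| x)%Z.
Proof. by case/andP=> x_gt0 xq; rewrite dvdzE absz_nat; apply/negP=> /(dvdn_leq x_gt0); lia. Qed.

Lemma dvdz_prime (p q : nat) : prime p -> prime q -> (p%:Z %| q%:Z)%Z = (p == q).
Proof. by move=> pp qp; rewrite dvdzE !absz_nat dvdn_prime2. Qed.

Lemma dvdz_sub_half (q : nat) (j s : int) : odd q ->
  (q%:Z %| j - s * (q.+1./2)%:Z)%Z = (q%:Z %| 2 * j - s)%Z.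
Proof.
move=> q_odd; have q2 : coprimez q%:Z 2 by rewrite coprimezE /= coprimen2 q_odd.
have twice_half : 2 * (q.+1./2)%:Z = q%:Z + 1.
  have := odd_double_half q.+1; rewrite /= q_odd add0n -mul2n; lia.
rewrite -(Gauss_dvdzr _ q2) mulrBr mulrCA twice_half.
have -> : 2 * j - s * (q%:Z + 1) = 2 * j - s - s * q%:Z by ring.
by rewrite rpredBr // dvdz_mull.
Qed.

Section Grids.
Variables (I : finType) (a : I -> nat) (k : I -> int).

Lemma gridE (q : nat) (s j : int) : grid q s j = ~~ (q%:Z %| j - s)%Z.
Proof. by rewrite /grid eqz_mod_dvd. Qed.

Lemma grid_prodP j : reflect (forall i, grid (a i) (k i) j) (grid_prod a k predT j).
Proof. by apply: (iffP forallP) => h i; [exact: implyP (h i) isT | rewrite implyTb]. Qed.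

Lemma is_filling_witness :
  (forall i, exists j, ~~ grid (a i) (k i) j /\
     forall i', i' != i -> grid (a i') (k i') j) ->
  is_filling a k.
Proof.
move=> wit i; have [j [off on]] := wit i; exists j.
have -> : grid_prod a k (predC1 i) j by apply/forallP=> i'; apply/implyP/on.
by rewrite eqb_id; apply: contraNN off => /grid_prodP.
Qed.

Lemma msr_ge_series (c : nat) (x y : int) :
  is_filling a k -> x < y -> c%:Z <= y - x ->
  (forall i, grid (a i) (k i) x) -> (forall i, grid (a i) (k i) y) ->
  (forall j, x < j < y -> exists i, ~~ grid (a i) (k i) j) ->
  msr_ge a c.
Proof.
move=> fill xy len onx ony off; exists k; split=> //; exists x, y; split=> //.
split=> //; try exact/grid_prodP.
move=> j xj jy; have [i offi] := off j (introT andP (conj xj jy)).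
by apply: contraNN offi => /grid_prodP.
Qed.
End Grids.

Section OddPrimeSieve.
Variable m : nat.
Local Notation P := (nthp m.+1).
Local Notation Q := (nthp m.+2).

(* Grid i is indexed as in the first family: i < m are the odd primes below P,
   i = m is P and i = m + 1 is Q. *)
Definition sieve_residue (i : nat) : int :=
  if (i < m)%N then 0 else if i == m then 1 else -1.

Definition sieve_hit (i : nat) (v : int) : bool :=
  ((nthp i.+1)%:Z %| v - sieve_residue i)%Z.

Definition sieve_covers (v : int) : bool := [exists i : 'I_m.+2, sieve_hit i v].

Definition sieve_only (i : 'I_m.+2) (v : int) : Prop :=
  sieve_hit i v /\ forall i' : 'I_m.+2, i' != i -> ~~ sieve_hit i' v.

Lemma sieve_hit_small i v : (i < m)%N -> sieve_hit i v = ((nthp i.+1)%:Z %| v)%Z.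
Proof. by rewrite /sieve_hit /sieve_residue => ->; rewrite subr0. Qed.

Lemma sieve_hit_P v : sieve_hit m v = (P%:Z %| v - 1)%Z.
Proof. by rewrite /sieve_hit /sieve_residue ltnn eqxx. Qed.

Lemma sieve_hit_Q v : sieve_hit m.+1 v = (Q%:Z %| v + 1)%Z.
Proof. by rewrite /sieve_hit /sieve_residue ltnNge leqnSn gtn_eqF // opprK. Qed.

Lemma sieve_indexP (i : 'I_m.+2) : [\/ (i < m)%N, val i = m | val i = m.+1].
Proof.
case: i => i /= ltim; case: (ltngtP i m) => [im|mi|->]; [exact: Or31| |exact: Or32].
by apply: Or33; lia.
Qed.

Lemma small_modulus i : (i < m)%N ->
  [/\ prime (nthp i.+1), (3 <= nthp i.+1)%N & (nthp i.+1 < P)%N].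
Proof. by move=> im; rewrite nthp_prime ltn_nthp ltnS im -nthp1 leq_nthp. Qed.

Lemma sieve_moduli_bounds : [/\ (3 <= P)%N, odd P & (P + 2 <= Q)%N].
Proof.
rewrite -nthp1 leq_nthp nthp_odd //; split=> //.
by have := ltn_nthpS m.+1; have := nthp_odd (ltn0Sn m.+1); have := nthp_odd (ltn0Sn m); lia.
Qed.

Lemma sieve_covers_odd v : ~~ (2 %| v)%Z -> (`|v| < P)%N -> sieve_covers v.
Proof.
move=> v_odd vP; have [P3 _ _] := sieve_moduli_bounds.
have [->|v_ne1] := eqVneq v 1.
  by apply/existsP; exists (Ordinal (leqnSn m.+1)); rewrite sieve_hit_P subrr dvdz0.
have [->|v_neN1] := eqVneq v (-1).
  by apply/existsP; exists (Ordinal (ltnSn m.+1)); rewrite sieve_hit_Q addNr dvdz0.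
have v_gt1 : (1 < `|v|)%N by lia.
pose p := pdiv `|v|; have p_prime : prime p := pdiv_prime v_gt1.
have p_dvd : (p %| `|v|)%N := pdiv_dvd _.
have p_le : (p <= `|v|)%N by apply: dvdn_leq; lia.
have [t pt] := nthp_surj p_prime.
have t_gt0 : (0 < t)%N.
  by case: t pt => // p2; rewrite -p2 in p_dvd; rewrite dvdzE p_dvd in v_odd.
have t_le : (t <= m)%N by rewrite -ltnS -ltn_nthp pt; lia.
have tm : (t.-1 < m.+2)%N by lia.
apply/existsP; exists (Ordinal tm); rewrite sieve_hit_small; last by rewrite /=; lia.
by rewrite [X in nthp X]/= prednK // pt dvdzE absz_nat.
Qed.

Lemma sieve_uncovers_pm v : `|v|%N = P -> ~~ sieve_covers v.
Proof.
move=> vP; have [P3 P_odd PQ] := sieve_moduli_bounds.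
apply/existsPn => i; case: (sieve_indexP i) => [im|->|->].
- have [q_prime _ qP] := small_modulus im.
  by rewrite sieve_hit_small // dvdzE vP dvdn_prime2 // ?nthp_prime // ltn_eqF.
- rewrite sieve_hit_P rpredBl ?dvdzE ?vP //.
  by apply: ndvdz_small; lia.
- by rewrite sieve_hit_Q; apply: ndvdz_small; lia.
Qed.

Lemma sieve_uncovers_2 : ~~ sieve_covers 2.
Proof.
have [P3 P_odd PQ] := sieve_moduli_bounds.
apply/existsPn => i; case: (sieve_indexP i) => [im|->|->].
- have [_ q3 _] := small_modulus im.
  by rewrite sieve_hit_small //; apply: ndvdz_small; lia.
- by rewrite sieve_hit_P; apply: ndvdz_small; lia.
- by rewrite sieve_hit_Q; apply: ndvdz_small; lia.
Qed.

Lemma sieve_only_small (i : 'I_m.+2) : (i < m)%N -> sieve_only i (nthp i.+1)%:Z.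
Proof.
move=> im; have [P3 P_odd PQ] := sieve_moduli_bounds; have [q_prime q3 qP] := small_modulus im.
split=> [|i' i'i]; first by rewrite sieve_hit_small ?dvdzz.
case: (sieve_indexP i') => [i'm|->|->].
- rewrite sieve_hit_small // dvdz_prime ?nthp_prime //.
  by apply: contra i'i => /eqP/nthp_inj [] /val_inj ->.
- by rewrite sieve_hit_P; apply: ndvdz_small; lia.
- by rewrite sieve_hit_Q; apply: ndvdz_small; lia.
Qed.

Lemma sieve_only_P (i : 'I_m.+2) : val i = m -> sieve_only i 1.
Proof.
move=> iE; have [P3 P_odd PQ] := sieve_moduli_bounds.
split=> [|i' i'i]; first by rewrite iE sieve_hit_P subrr dvdz0.
case: (sieve_indexP i') => [i'm|i'E|->].
- have [_ q3 _] := small_modulus i'm.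
  by rewrite sieve_hit_small //; apply: ndvdz_small; lia.
- by move: i'i; rewrite -(inj_eq val_inj) iE i'E eqxx.
- by rewrite sieve_hit_Q; apply: ndvdz_small; lia.
Qed.

Lemma sieve_only_Q (i : 'I_m.+2) : val i = m.+1 -> sieve_only i (-1).
Proof.
move=> iE; have [P3 P_odd PQ] := sieve_moduli_bounds.
split=> [|i' i'i]; first by rewrite iE sieve_hit_Q addNr dvdz0.
case: (sieve_indexP i') => [i'm|->|i'E].
- have [_ q3 _] := small_modulus i'm.
  by rewrite sieve_hit_small //; apply: ndvdz_small; lia.
- by rewrite sieve_hit_P; apply: ndvdz_small; lia.
- by move: i'i; rewrite -(inj_eq val_inj) iE i'E eqxx.
Qed.

Lemma sieve_only_odd (i : 'I_m.+2) : exists2 v, ~~ (2 %| v)%Z & sieve_only i v.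
Proof.
case: (sieve_indexP i) => [im|iE|iE].
- exists (nthp i.+1)%:Z; last exact: sieve_only_small.
  by rewrite dvdzE absz_nat dvdn2 nthp_odd.
- by exists 1; last exact: sieve_only_P.
- by exists (-1); last exact: sieve_only_Q.
Qed.

End OddPrimeSieve.

Section SieveFillings.
Variable m : nat.
Local Notation P := (nthp m.+1).

(* (q + 1) / 2 inverts 2 modulo the odd modulus q (see dvdz_sub_half). *)
Definition odd_primes_shift (i : 'I_m.+2) : int :=
  (P%:Z + sieve_residue m i) * ((nthp i.+1).+1./2)%:Z.

Lemma odd_primes_gridE (i : 'I_m.+2) j :
  grid (nthp i.+1) (odd_primes_shift i) j = ~~ sieve_hit m i (2 * j - P%:Z).
Proof. by rewrite gridE dvdz_sub_half ?nthp_odd // /sieve_hit opprD addrA. Qed.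

Lemma msr_ge_odd_primes : msr_ge (fun i : 'I_m.+2 => nthp i.+1) P.
Proof.
have [P3 P_odd _] := sieve_moduli_bounds m.
apply: (msr_ge_series (k := odd_primes_shift) (x := 0) (y := P%:Z)); rewrite ?subr0 //.
- apply: is_filling_witness => i; have [v v_odd [hit_i only_i]] := sieve_only_odd i.
  have /dvdzP [j vE] : (2 %| v + P%:Z)%Z by lia.
  have {}vE : v = 2 * j - P%:Z by lia.
  exists j; rewrite odd_primes_gridE -vE negbK; split=> // i' i'i.
  by rewrite odd_primes_gridE -vE; apply: only_i.
- by lia.
- by move=> i; rewrite odd_primes_gridE; apply/existsPn: i; apply: sieve_uncovers_pm; lia.
- by move=> i; rewrite odd_primes_gridE; apply/existsPn: i; apply: sieve_uncovers_pm; lia.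
- move=> j /andP[j_gt0 jP].
  have /existsP [i hit_i] : sieve_covers m (2 * j - P%:Z) by apply: sieve_covers_odd; lia.
  by exists i; rewrite odd_primes_gridE negbK.
Qed.

Definition primes_shift (i : 'I_m.+3) : int :=
  if unlift ord0 i is Some i' then P%:Z + sieve_residue m i' else 1.

Lemma primes_grid0 J : grid (nthp (@ord0 m.+2)) (primes_shift ord0) J = ~~ (2 %| J - 1)%Z.
Proof. by rewrite gridE /primes_shift unlift_none. Qed.

Lemma primes_gridS (i : 'I_m.+2) J :
  grid (nthp (lift ord0 i)) (primes_shift (lift ord0 i)) J = ~~ sieve_hit m i (J - P%:Z).
Proof. by rewrite gridE /primes_shift liftK /sieve_hit opprD addrA. Qed.

Lemma msr_ge_primes : msr_ge (fun i : 'I_m.+3 => nthp i) (2 * P).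
Proof.
have [P3 P_odd _] := sieve_moduli_bounds m.
apply: (msr_ge_series (k := primes_shift) (x := 0) (y := (2 * P)%N%:Z)); rewrite ?subr0 //.
- apply: is_filling_witness => i; case: (unliftP ord0 i) => [i0|] ->.
    have [v v_odd [hit_i only_i]] := sieve_only_odd i0.
    exists (v + P%:Z); rewrite primes_gridS addrK negbK; split=> // i'.
    case: (unliftP ord0 i') => [i1|] ->; last by rewrite primes_grid0; lia.
    by rewrite (inj_eq (@lift_inj _ _)) primes_gridS addrK => /only_i.
  exists (P%:Z + 2); rewrite primes_grid0 negbK; split; first by lia.
  move=> i'; case: (unliftP ord0 i') => [i1|] ->; last by rewrite eqxx.
  by rewrite primes_gridS addrC addKr; move/existsPn: (sieve_uncovers_2 m).
- by lia.
- move=> i; case: (unliftP ord0 i) => [i0|] ->; last by rewrite primes_grid0; lia.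
  by rewrite primes_gridS; apply/existsPn: i0; apply: sieve_uncovers_pm; lia.
- move=> i; case: (unliftP ord0 i) => [i0|] ->; last by rewrite primes_grid0; lia.
  by rewrite primes_gridS; apply/existsPn: i0; apply: sieve_uncovers_pm; lia.
- move=> J /andP[J_gt0 J_lt]; have [J_odd|J_even] := boolP (2 %| J - 1)%Z.
    by exists ord0; rewrite primes_grid0 negbK.
  have /existsP [i hit_i] : sieve_covers m (J - P%:Z) by apply: sieve_covers_odd; lia.
  by exists (lift ord0 i); rewrite primes_gridS negbK.
Qed.
End SieveFillings.

Lemma msr_ge_three : msr_ge (fun i : 'I_1 => nthp i.+1) (nthp 0).
Proof.
have grid3 (i : 'I_1) j : grid (nthp i.+1) 0 j = ~~ (3 %| j)%Z.
  by rewrite (ord1 i) nthp1 gridE subr0.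
apply: (msr_ge_series (k := fun=> 0) (x := -1) (y := 1)) => //.
- apply: is_filling_witness => i; exists 0; rewrite grid3; split=> // i'.
  by rewrite (ord1 i) (ord1 i') eqxx.
- by move=> i; rewrite grid3.
- by move=> i; rewrite grid3.
- by move=> j /andP[? ?]; exists ord0; rewrite grid3; lia.
Qed.

Lemma msr_ge_two_three : msr_ge (fun i : 'I_2 => nthp i) (2 * nthp 0).
Proof.
pose k (i : 'I_2) : int := if i == ord0 then 1 else 0.
have grid2 : grid (nthp (@ord0 1)) (k ord0) =1 fun j => ~~ (2 %| j - 1)%Z.
  by move=> j; rewrite gridE.
have grid3 : grid (nthp (@ord_max 1)) (k ord_max) =1 fun j => ~~ (3 %| j)%Z.
  by move=> j; rewrite gridE nthp1 subr0.
have split2 (i : 'I_2) : i = ord0 \/ i = ord_max.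
  by case: i => -[|[|//]] ?; [left | right]; apply: val_inj.
apply: (msr_ge_series (k := k) (x := -2) (y := 2)) => //.
- apply: is_filling_witness => i.
  case: (split2 i) => ->; [exists 1; rewrite grid2 | exists 0; rewrite grid3].
    by split=> // i'; case: (split2 i') => -> //; rewrite grid3.
  by split=> // i'; case: (split2 i') => -> //; rewrite grid2.
- by move=> i; case: (split2 i) => ->; rewrite ?grid2 ?grid3.
- by move=> i; case: (split2 i) => ->; rewrite ?grid2 ?grid3.
- move=> j /andP[? ?]; have [j_odd|j_even] := boolP (2 %| j - 1)%Z.
    by exists ord0; rewrite grid2 j_odd.
  by exists ord_max; rewrite grid3; lia.
Qed.

Theorem theorem13 (n : nat) (hn : (1 <= n)%N) :
  msr_ge (fun i : 'I_n => nthp i.+1) (nthp n.-1) /\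
  msr_ge (fun i : 'I_n.+1 => nthp i) (2 * nthp n.-1).
Proof.
case: n hn => [|[|m]] // _.
  by split; [exact: msr_ge_three | exact: msr_ge_two_three].
by split; [exact: msr_ge_odd_primes | exact: msr_ge_primes].
Qed.
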